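(* If $G$ is a finite simple unmixed graph without induced $4$-cycles, then $I_c(G)$ is linearly presented.
   Context: $G$ has vertices $t_1,\dots,t_s$, $S=K[t_1,\dots,t_s]$, $K$ a field. $G$ is unmixed if all minimal vertex covers (inclusion-minimal vertex sets meeting every edge) have equal size. $I_c(G)$ is the ideal generated by $\prod_{t_i\in C}t_i$ over the minimal vertex covers $C$ of $G$. A monomial ideal minimally generated by $u_1,\dots,u_r$ is linearly presented if all $u_i$ have the same degree and the kernel of $S^r\to S$, $e_i\mapsto u_i$, is generated by vectors whose entries are linear forms. *)

From mathcomp Require Import all_boot all_algebra.
From mathcomp Require Import mpoly.
Set Implicit Arguments. Unset Strict Implicit. Unset Printing Implicit Defensive.
Import GRing.Theory.
Local Open Scope ring_scope.

Definition simple_graph (s : nat) (E : rel 'I_s) : Prop :=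
  ssrbool.symmetric E /\ ssrbool.irreflexive E.

Definition vertex_cover (s : nat) (E : rel 'I_s) (C : {set 'I_s}) : bool :=
  [forall x, forall y, E x y ==> ((x \in C) || (y \in C))].

Definition minimal_vertex_cover (s : nat) (E : rel 'I_s) (C : {set 'I_s}) : bool :=
  minset (vertex_cover E) C.

Definition unmixed (s : nat) (E : rel 'I_s) : Prop :=
  forall C D : {set 'I_s}, minimal_vertex_cover E C -> minimal_vertex_cover E D ->
    #|C| = #|D|.

Definition has_induced_C4 (s : nat) (E : rel 'I_s) : Prop :=
  exists a b c d : 'I_s,
    [/\ uniq [:: a; b; c; d],
        [&& E a b, E b c, E c d & E d a] &
        ~~ E a c && ~~ E b d].

Definition ideal_gen (s : nat) (K : fieldType) (gens : {mpoly K[s]} -> Prop)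
  (p : {mpoly K[s]}) : Prop :=
  exists (k : nat) (a g : 'I_k -> {mpoly K[s]}),
    (forall j, gens (g j)) /\ p = \sum_(j < k) a j * g j.

Definition cover_ideal {s : nat} (K : fieldType) (E : rel 'I_s) : {mpoly K[s]} -> Prop :=
  ideal_gen (fun u => exists C : {set 'I_s},
                 minimal_vertex_cover E C /\ u = \prod_(i in C) 'X_i).

(* a linear form: homogeneous polynomial of degree 1 (0 allowed) *)
Definition linear_form (s : nat) (K : fieldType) (p : {mpoly K[s]}) : bool :=
  all (fun m : 'X_{1..s} => mdeg m == 1%N) (msupp p).

Definition syzygy (s : nat) (K : fieldType) (r : nat) (u : 'I_r -> {mpoly K[s]})
  (v : 'I_r -> {mpoly K[s]}) : Prop :=
  \sum_(i < r) v i * u i = 0.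

Definition linearly_presented (s : nat) (K : fieldType) (I : {mpoly K[s]} -> Prop) : Prop :=
  exists (r : nat) (m : 'I_r -> 'X_{1..s}),
    let u := fun i => ('X_[m i] : {mpoly K[s]}) in
    [/\
        (forall p, I p <-> ideal_gen (fun q => exists i, q = u i) p),
        (forall i, ~ ideal_gen (fun q => exists2 j, j != i & q = u j) (u i)),
        (forall i j, mdeg (m i) = mdeg (m j)) &
        exists (k : nat) (w : 'I_k -> 'I_r -> {mpoly K[s]}),
          (forall l, syzygy u (w l)) /\
          (forall l i, linear_form (w l i)) /\
          (forall v, syzygy u v ->
             exists c : 'I_k -> {mpoly K[s]},
               forall i, v i = \sum_(l < k) c l * w l i)].
Arguments cover_ideal {s} K E _.

(* Let the generators x^C of I_c(G), C a minimal vertex cover, be joined by an edge when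
   C and D differ by swapping one vertex; the pair syzygy x_b e_C - x_a e_D is then linear.
   If for every multidegree mu the generators dividing x^mu are connected by such edges,
   the syzygies are spanned by these linear ones: each term c x^n e_C of a syzygy is moved
   along a chain of edges to one generator fixed for the multidegree n + C, and what is
   left is a syzygy with a single generator in each multidegree, hence zero.
   Connectivity comes from unmixedness and the absence of induced 4-cycles. For minimal
   covers C <> D and y in C \ D, a minimal cover M inside C \ y plus the neighbours of y
   outside C is closer to D, and C reaches M by swaps: every z in C \ M other than y has
   a single neighbour outside C (two of them would span an induced 4-cycle with y), so
   replacing z by it gives a cover of the same size, which is minimal as G is unmixed. *)

From mathcomp Require Import all_boot all_algebra.
From mathcomp Require Import mpoly.
From mathcomp Require Import zify.
Set Implicit Arguments. Unset Strict Implicit. Unset Printing Implicit Defensive.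
Import GRing.Theory.

Lemma homo_connect (T T' : finType) (e : rel T) (e' : rel T') (h : T -> T') :
  {homo h : x y / e x y >-> e' x y} -> {homo h : x y / connect e x y >-> connect e' x y}.
Proof.
move=> he x y /connectP [p ep ->]; apply/connectP.
by exists (map h p); [exact: homo_path ep | rewrite last_map].
Qed.

Section VertexCovers.
Variables (s : nat) (E : rel 'I_s).
Local Notation vc := (vertex_cover E).
Local Notation mvc := (minimal_vertex_cover E).
Implicit Types (C D M Q B U : {set 'I_s}) (x y z : 'I_s).

Lemma vertex_coverP C : reflect (forall x y, E x y -> (x \in C) || (y \in C)) (vc C).
Proof.
apply: (iffP forallP) => [h x y exy | h x].
  by move: (h x) => /forallP /(_ y) /implyP; apply.
by apply/forallP => y; apply/implyP; apply: h.
Qed.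

Lemma mvc_vc C : mvc C -> vc C.
Proof. exact: minsetp. Qed.

Lemma mvc_min C B : mvc C -> vc B -> B \subset C -> B = C.
Proof. exact: minsetinf. Qed.

Lemma mvc_exists Q : vc Q -> exists2 M, mvc M & M \subset Q.
Proof. by case/minset_exists => M; exists M. Qed.

Lemma mvc_setD_neq0 C D : vc C -> mvc D -> C != D -> C :\: D != set0.
Proof.
move=> vcC mvcD; apply: contra; rewrite setD_eq0 => sCD.
by rewrite (mvc_min mvcD vcC sCD).
Qed.

Hypothesis E_simple : simple_graph E.

Lemma edge_sym x y : E x y = E y x.
Proof. by case: E_simple => sym _; apply: sym. Qed.

Lemma edge_irr x : E x x = false.
Proof. by case: E_simple => _ irr; apply: irr. Qed.

Lemma edge_neq x y : E x y -> x != y.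
Proof. by apply: contraTneq => ->; rewrite edge_irr. Qed.

Lemma vc_superset C Q : vc C -> C \subset Q -> vc Q.
Proof.
move=> /vertex_coverP vcC /subsetP sCQ; apply/vertex_coverP => x y /vcC.
by case/orP => /sCQ ->; rewrite ?orbT.
Qed.

Definition outer_neighbours C z : {set 'I_s} := [set x | (x \notin C) && E z x].

Lemma vc_replace C z : vc C -> vc ((C :\ z) :|: outer_neighbours C z).
Proof.
move=> vcC.
have cover_at c d : E c d -> c \in C -> (c \in (C :\ z) :|: outer_neighbours C z)
                                      || (d \in (C :\ z) :|: outer_neighbours C z).
  move=> ecd cC; rewrite !inE.
  have [cz|_] := eqVneq c z; last by rewrite cC.
  subst c; have [dC|dC] := boolP (d \in C); last by rewrite ecd !orbT.
  by rewrite [d == z]eq_sym (edge_neq ecd) !orbT.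
apply/vertex_coverP => a b eab.
case/orP: (vertex_coverP _ vcC a b eab) => [aC|bC]; first exact: cover_at.
by rewrite orbC; apply: cover_at bC; rewrite edge_sym.
Qed.

Lemma mvc_outer_neighbour C z : mvc C -> z \in C -> exists2 x, x \notin C & E z x.
Proof.
move=> mvcC zC.
have [N0|[x]] := set_0Vmem (outer_neighbours C z); last by rewrite inE => /andP [xC zx]; exists x.
have := vc_replace z (mvc_vc mvcC); rewrite N0 setU0 => vcCz.
by move: zC; rewrite -(mvc_min mvcC vcCz (subD1set C z)) setD11.
Qed.

Lemma vc_swap C z x :
  vc C -> (forall x', x' \notin C -> E z x' -> x' = x) -> vc (x |: (C :\ z)).
Proof.
move=> vcC outer; apply: vc_superset (vc_replace z vcC) _.
rewrite subUset subsetUr; apply/subsetP => a; rewrite !inE => /andP [aC za].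
by rewrite (outer a aC za) eqxx.
Qed.

Hypothesis E_unmixed : unmixed E.

Lemma mvc_card_vc C Q : mvc C -> vc Q -> #|Q| = #|C| -> mvc Q.
Proof.
move=> mvcC vcQ cardQ; have [M mvcM sMQ] := mvc_exists vcQ.
suff -> : Q = M by [].
by apply/eqP; rewrite eq_sym eqEcard sMQ cardQ (E_unmixed mvcC mvcM) leqnn.
Qed.

Lemma mvc_cardD C D : mvc C -> mvc D -> #|C :\: D| = #|D :\: C|.
Proof. by move=> mvcC mvcD; rewrite !cardsD setIC (E_unmixed mvcC mvcD). Qed.

Lemma mvc_swap C z x :
  mvc C -> z \in C -> x \notin C -> (forall x', x' \notin C -> E z x' -> x' = x) ->
  mvc (x |: (C :\ z)).
Proof.
move=> mvcC zC xC outer; apply: (mvc_card_vc mvcC (vc_swap (mvc_vc mvcC) outer)).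
by rewrite cardsU1 !inE (negbTE xC) andbF (cardsD1 z C) zC.
Qed.

Hypothesis E_C4_free : ~ has_induced_C4 E.

Lemma common_neighbours_adjacent y z x x' :
  y != z -> ~~ E y z -> x != x' -> E y x -> E y x' -> E z x -> E z x' -> E x x'.
Proof.
move=> yz nyz xx' yx yx' zx zx'; apply: contraT => nxx'; case: E_C4_free.
exists y, x, z, x'; split; last by rewrite nyz nxx'.
- by rewrite /= !inE !negb_or yz xx' !edge_neq // edge_sym.
- by rewrite yx (edge_sym x) zx zx' (edge_sym x').
Qed.

Definition cover_swap U : rel {set 'I_s} :=
  [rel P Q | [&& mvc P, mvc Q, P \subset U, Q \subset U & #|P :\: Q| == 1]].

Lemma cover_swap_connect_nbhd U C M y :
  mvc C -> mvc M -> C \subset U -> M \subset U -> y \in C :\: M ->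
  {in M :\: C, forall a, E y a} -> connect (cover_swap U) C M.
Proof.
move=> + mvcM + sMU; move: {2}#|C :\: M| (leqnn #|C :\: M|) => n.
elim: n C => [|n IH] C leCM mvcC sCU yCM adj_y.
  by move: leCM; rewrite leqn0 cards_eq0 => /eqP CM0; rewrite CM0 inE in yCM.
have [le1|gt1] := leqP #|C :\: M| 1.
  apply: connect1; rewrite /cover_swap /= mvcC mvcM sCU sMU eqn_leq le1 card_gt0.
  by apply/set0Pn; exists y.
have [z] : exists z, z \in (C :\: M) :\ y.
  by apply/set0Pn; rewrite -card_gt0; move: gt1; rewrite (cardsD1 y (C :\: M)) yCM.
rewrite !inE => /and3P [zy zM zC].
move: yCM; rewrite inE => /andP [yM yC].
have vcC := vertex_coverP _ (mvc_vc mvcC).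
have vcM := vertex_coverP _ (mvc_vc mvcM).
have outer_in_M x : x \notin C -> E z x -> x \in M :\: C.
  by move=> xC zx; rewrite inE xC; case/orP: (vcM _ _ zx) => //; rewrite (negbTE zM).
have [x xC zx] := mvc_outer_neighbour mvcC zC.
have outer_uniq x' : x' \notin C -> E z x' -> x' = x.
  move=> x'C zx'; apply/eqP; apply: contraT => x'x.
  have nyz : ~~ E y z by apply/negP => /vcM; rewrite (negbTE yM) (negbTE zM).
  have yz : y != z by rewrite eq_sym.
  have := common_neighbours_adjacent yz nyz x'x (adj_y _ (outer_in_M _ x'C zx')).
  move=> /(_ (adj_y _ (outer_in_M _ xC zx)) zx' zx).
  by move/vcC; rewrite (negbTE x'C) (negbTE xC).
have xM : x \in M by have := outer_in_M _ xC zx; rewrite inE => /andP [].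
have sC1U : x |: (C :\ z) \subset U.
  by rewrite subUset sub1set (subsetP sMU) // (subset_trans (subD1set C z)).
apply: (connect_trans (y := x |: (C :\ z))).
  apply: connect1; rewrite /cover_swap /= mvcC (mvc_swap mvcC zC xC outer_uniq) sCU sC1U.
  apply/cards1P; exists z; apply/setP => a; rewrite !inE.
  apply/andP/eqP => [[/norP [_ /nandP [/negPn/eqP // | /negP aC]] /aC //] | ->].
  by rewrite eqxx zC orbF; split=> //; apply: contraNneq xC => <-.
apply: IH => //.
- have -> : (x |: (C :\ z)) :\: M = (C :\: M) :\ z.
    apply/setP => a; rewrite !inE; case: (eqVneq a x) => [->|_]; first by rewrite xM /= andbF.
    by case: (a \in M); rewrite ?andbF.
  by rewrite -ltnS (leq_trans _ leCM) // (cardsD1 z (C :\: M)) !inE zM zC.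
- exact: mvc_swap mvcC zC xC outer_uniq.
- by rewrite !inE yM [y == z]eq_sym zy yC orbT.
- move=> a; rewrite !inE negb_or => /andP [/andP [_ nC1a] aM].
  apply: adj_y; rewrite inE aM andbT; apply: contra nC1a => aC.
  by rewrite aC andbT; apply: contraNneq zM => <-.
Qed.

Lemma exists_mvc_closer C D y :
  vc C -> vc D -> y \in C :\: D ->
  exists M, [/\ mvc M, M \subset C :|: D, y \notin M,
                {in M :\: C, forall a, E y a} & #|M :\: D| < #|C :\: D|].
Proof.
move=> vcC vcD yCD; move: (yCD); rewrite inE => /andP [yD yC].
have [M mvcM sMQ] := mvc_exists (vc_replace y vcC).
have ND : outer_neighbours C y \subset D.
  apply/subsetP => a; rewrite inE => /andP [_ ya].
  by case/orP: (vertex_coverP _ vcD y a ya) => //; rewrite (negbTE yD).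
have MD a : a \in M -> a \notin D -> a \in (C :\: D) :\ y.
  move=> /(subsetP sMQ); rewrite !inE => /orP [/andP [ay aC] aD|aN aD]; first by rewrite ay aD.
  by move: aD; rewrite (subsetP ND) // inE.
exists M; split=> //.
- apply: subset_trans sMQ _; rewrite subUset (subset_trans (subD1set C y)) ?subsetUl //.
  exact: subset_trans ND (subsetUr C D).
- by apply/negP => /(subsetP sMQ); rewrite !inE eqxx edge_irr andbF.
- move=> a; rewrite inE => /andP [aC /(subsetP sMQ)].
  by rewrite !inE (negbTE aC) andbF => /andP [].
- rewrite (cardsD1 y (C :\: D)) yCD add1n ltnS; apply: subset_leq_card.
  by apply/subsetP => a; rewrite inE => /andP [aD aM]; apply: MD.
Qed.

Lemma cover_swap_connect U C D :
  mvc C -> mvc D -> C \subset U -> D \subset U -> connect (cover_swap U) C D.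
Proof.
move=> + mvcD + sDU; move: {2}#|C :\: D| (leqnn #|C :\: D|) => n.
elim: n C => [|n IH] C leCD mvcC sCU; have [->|neqCD] := eqVneq C D; try exact: connect0.
  by have := mvc_setD_neq0 (mvc_vc mvcC) mvcD neqCD; rewrite -cards_eq0 -leqn0 leCD.
have /set0Pn [y yCD] := mvc_setD_neq0 (mvc_vc mvcC) mvcD neqCD.
have [M [mvcM sMCD yM adj_y ltMD]] := exists_mvc_closer (mvc_vc mvcC) (mvc_vc mvcD) yCD.
have sMU : M \subset U by apply: subset_trans sMCD _; rewrite subUset sCU sDU.
apply: (connect_trans (y := M)); last by apply: IH; rewrite // -ltnS (leq_trans ltMD).
apply: (cover_swap_connect_nbhd mvcC mvcM sCU sMU _ adj_y).
by move: yCD; rewrite !inE yM => /andP [_ ->].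
Qed.

End VertexCovers.

Local Open Scope ring_scope.

Section SquarefreeMonomials.
Variable s : nat.
Implicit Types (C D : {set 'I_s}) (mu : 'X_{1..s}).

Definition mnm_of_set C : 'X_{1..s} := [multinom (i \in C : nat) | i < s].

Lemma mnm_of_setE C i : mnm_of_set C i = (i \in C).
Proof. by rewrite mnmE. Qed.

Lemma mdeg_mnm_of_set C : mdeg (mnm_of_set C) = #|C|.
Proof.
rewrite mdegE -sum1_card [RHS]big_mkcond /=; apply: eq_bigr => i _.
by rewrite mnm_of_setE; case: (i \in C).
Qed.

Lemma mpolyX_mnm_of_set (R : ringType) C :
  'X_[mnm_of_set C] = \prod_(i in C) ('X_i : {mpoly R[s]}).
Proof.
rewrite mprodXE; congr 'X_[_]; apply/mnmP => i; rewrite mnm_of_setE mnm_sumE.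
rewrite (eq_bigr (fun j => nat_of_bool (j == i))) => [|j _]; last by rewrite mnm1E.
have [iC|iC] := boolP (i \in C); last first.
  by rewrite big1 // => j jC; have -> : (j == i) = false by apply: contraNF iC => /eqP <-.
by rewrite (bigD1 i) //= eqxx big1 // => j /andP [_ /negbTE ->].
Qed.

Lemma lem_mnm_of_set C mu : (mnm_of_set C <= mu)%MM = (C \subset [set i | 0 < mu i]%N).
Proof.
apply/mnm_lepP/subsetP => [le_C i iC | sub i]; first by have := le_C i; rewrite mnm_of_setE iC inE.
by rewrite mnm_of_setE; case: (boolP (i \in C)) => // /sub; rewrite inE.
Qed.

Lemma mlcm_mnm_of_setB C D :
  (mlcm (mnm_of_set C) (mnm_of_set D) - mnm_of_set C)%MM = mnm_of_set (D :\: C).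
Proof.
apply/mnmP => i; rewrite !mnmE inE.
by case: (i \in C); case: (i \in D).
Qed.

End SquarefreeMonomials.

Section LinearForms.
Variables (K : fieldType) (s : nat).
Implicit Types (p q : {mpoly K[s]}).

Lemma linear_formX (d : 'X_{1..s}) : mdeg d = 1%N -> linear_form ('X_[d] : {mpoly K[s]}).
Proof. by move=> dd; rewrite /linear_form msuppX /= dd. Qed.

Lemma linear_form0 : linear_form (0 : {mpoly K[s]}).
Proof. by rewrite /linear_form msupp0. Qed.

Lemma linear_formB p q : linear_form p -> linear_form q -> linear_form (p - q).
Proof.
move=> /allP lp /allP lq; apply/allP => d /msuppD_le; rewrite mem_cat.
by case/orP => [/lp | ]; rewrite // (perm_mem (msuppN q)) => /lq.
Qed.

End LinearForms.

Lemma ideal_gen_sub (K : fieldType) (s : nat) (g g' : {mpoly K[s]} -> Prop) p :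
  (forall q, g q -> g' q) -> ideal_gen g p -> ideal_gen g' p.
Proof. by move=> gg' [k [a [h [gh ->]]]]; exists k, a, h; split=> // j; apply: gg'. Qed.

Lemma mcoeffMX_eq0 (R : ringType) (s : nat) (p : {mpoly R[s]}) (d mu : 'X_{1..s}) :
  ~~ (d <= mu)%MM -> (p * 'X_[d])@_mu = 0.
Proof.
move=> ndiv; apply: memN_msupp_eq0; rewrite (perm_mem (msuppMX _ _)).
by apply: contra ndiv => /mapP [n _ ->]; exact: lem_addr.
Qed.

Lemma mpolyX_notin_ideal (K : fieldType) (s r : nat) (m : 'I_r -> 'X_{1..s}) i :
  (forall j, j != i -> ~~ (m j <= m i)%MM) ->
  ~ ideal_gen (fun q : {mpoly K[s]} => exists2 j, j != i & q = 'X_[m j]) 'X_[m i].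
Proof.
move=> ndiv [k [a [g [gen_g /(congr1 (mcoeff (m i)))]]]].
rewrite mcoeffX eqxx raddf_sum big1 => [/eqP|l _]; first by rewrite oner_eq0.
by have [j ji ->] := gen_g l; exact: mcoeffMX_eq0 (ndiv j ji).
Qed.

Section SyzygySpan.
Variables (K : fieldType) (s r : nat) (J : finType) (w : J -> 'I_r -> {mpoly K[s]}).
Implicit Types (v : 'I_r -> {mpoly K[s]}).

Definition in_span v := exists c : J -> {mpoly K[s]}, forall i, v i = \sum_j c j * w j i.

Lemma in_span_eq v v' : in_span v -> v' =1 v -> in_span v'.
Proof. by move=> [c hc] vv'; exists c => i; rewrite vv' hc. Qed.

Lemma in_span0 : in_span (fun=> 0).
Proof. by exists (fun=> 0) => i; rewrite big1 // => j _; rewrite mul0r. Qed.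

Lemma in_spanD v v' : in_span v -> in_span v' -> in_span (fun i => v i + v' i).
Proof.
move=> [c hc] [c' hc']; exists (fun j => c j + c' j) => i.
by rewrite hc hc' -big_split; apply: eq_bigr => j _; rewrite mulrDl.
Qed.

Lemma in_spanMl x v : in_span v -> in_span (fun i => x * v i).
Proof.
move=> [c hc]; exists (fun j => x * c j) => i.
by rewrite hc mulr_sumr; apply: eq_bigr => j _; rewrite mulrA.
Qed.

Lemma in_span_gen j : in_span (w j).
Proof.
exists (fun j' => (j' == j)%:R) => i.
by rewrite (bigD1 j) //= eqxx mul1r big1 ?addr0 // => j' /negbTE ->; rewrite mul0r.
Qed.

Lemma in_span_sum (I : Type) (l : seq I) (F : I -> 'I_r -> {mpoly K[s]}) :
  (forall x, in_span (F x)) -> in_span (fun i => \sum_(x <- l) F x i).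
Proof.
move=> spanF; elim: l => [|x l IH]; first by apply: (in_span_eq in_span0) => i; rewrite big_nil.
by apply: (in_span_eq (in_spanD (spanF x) IH)) => i; rewrite big_cons.
Qed.

Lemma in_span_syzygy u v : (forall j, syzygy u (w j)) -> in_span v -> syzygy u v.
Proof.
move=> syz_w [c hc]; rewrite /syzygy (eq_bigr (fun i => \sum_j c j * (w j i * u i))).
  by rewrite exchange_big big1 // => j _; rewrite -mulr_sumr syz_w mulr0.
by move=> i _; rewrite hc mulr_suml; apply: eq_bigr => j _; rewrite mulrA.
Qed.

Lemma in_span_enum v :
  in_span v -> exists c : 'I_#|J| -> {mpoly K[s]}, forall i, v i = \sum_l c l * w (enum_val l) i.
Proof.
move=> [c hc]; exists (fun l => c (enum_val l)) => i.
by rewrite hc -(big_enum_val (fun j => c j * w j i)).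
Qed.

End SyzygySpan.

Section MonomialSyzygies.
Variables (K : fieldType) (s r : nat) (m : 'I_r -> 'X_{1..s}).
Local Notation R := {mpoly K[s]}.
Local Notation u := (fun i => 'X_[m i] : R).
Implicit Types (v : 'I_r -> R) (p q : 'I_r) (mu : 'X_{1..s}).

(* The vector X^(mu - m p) e_p; junk (by truncated subtraction) unless m p divides mu. *)
Definition mlift mu p i : R := if i == p then 'X_[mu - m p] else 0.

Lemma mlift_mulX mu p i : (m p <= mu)%MM -> mlift mu p i * u i = if i == p then 'X_[mu] else 0.
Proof.
by move=> le_p; rewrite /mlift; case: eqP => [->|_]; rewrite ?mul0r // -mpolyXD submK.
Qed.

Lemma syzygy_mliftB mu p q : (m p <= mu)%MM -> (m q <= mu)%MM ->
  syzygy u (fun i => mlift mu p i - mlift mu q i).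
Proof.
move=> le_p le_q; rewrite /syzygy.
under eq_bigr do rewrite mulrBl mlift_mulX // mlift_mulX //.
by rewrite sumrB -!big_mkcond !big_pred1_eq subrr.
Qed.

Lemma mulX_mlift mu l p i : (m p <= l)%MM -> (l <= mu)%MM ->
  'X_[mu - l] * mlift l p i = mlift mu p i.
Proof.
move=> /mnm_lepP le_pl /mnm_lepP le_lmu; rewrite /mlift; case: eqP => _; last by rewrite mulr0.
rewrite -mpolyXD; congr 'X_[_]; apply/mnmP => j; rewrite !mnmE.
by have := le_pl j; have := le_lmu j; lia.
Qed.

Definition pair_syzygy p q i := mlift (mlcm (m p) (m q)) p i - mlift (mlcm (m p) (m q)) q i.

Lemma pair_syzygyP p q : syzygy u (pair_syzygy p q).
Proof. exact: syzygy_mliftB (lem_mlcml _ _) (lem_mlcmr _ _). Qed.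

Lemma pair_syzygy_linear p q i :
  mdeg (mlcm (m p) (m q) - m p) = 1%N -> mdeg (mlcm (m p) (m q) - m q) = 1%N ->
  linear_form (pair_syzygy p q i).
Proof.
move=> dp dq; rewrite /pair_syzygy /mlift.
by apply: linear_formB; case: eqP => _; rewrite ?linear_formX ?linear_form0.
Qed.

Lemma mlift_expand v q :
  v q = \sum_i \sum_(n <- msupp (v i)) ((v i)@_n)%:MP * mlift (n + m i)%MM i q.
Proof.
rewrite (bigD1 q) //= [X in _ + X]big1 => [|i /negbTE iq]; last first.
  by rewrite big1 // => n _; rewrite /mlift eq_sym iq mulr0.
rewrite addr0 {1}[v q]mpolyE; apply: eq_bigr => n _.
by rewrite /mlift eqxx addmK mul_mpolyC.
Qed.

Lemma syzygy_eq0 v (rho : 'X_{1..s} -> option 'I_r) :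
  syzygy u v -> (forall q mu, rho mu != Some q -> (v q * u q)@_mu = 0) -> forall q, v q = 0.
Proof.
move=> syz_v off_rho q.
have vu0 : v q * u q = 0.
  apply/mpolyP => mu; rewrite mcoeff0.
  have [rho_q|] := eqVneq (rho mu) (Some q); last exact: off_rho.
  move/(congr1 (mcoeff mu)): syz_v; rewrite mcoeff0 raddf_sum (bigD1 q) //= big1 ?addr0 //.
  by move=> j jq; apply: off_rho; rewrite rho_q; apply: contraNneq jq => -[->].
by apply/mpolyP => n; rewrite -(mcoeffMX (v q) (m q) n) [_ * _]vu0 !mcoeff0.
Qed.

Section Connected.
Variable T : rel 'I_r.

Definition edge_syzygy (pq : 'I_r * 'I_r) i : R :=
  if T pq.1 pq.2 then pair_syzygy pq.1 pq.2 i else 0.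

Definition divisor_edge mu : rel 'I_r :=
  [rel p q | [&& T p q, (m p <= mu)%MM & (m q <= mu)%MM]].

Lemma edge_syzygyP pq : syzygy u (edge_syzygy pq).
Proof.
rewrite /edge_syzygy; case: (T _ _); first exact: pair_syzygyP.
by rewrite /syzygy big1 // => i _; rewrite mul0r.
Qed.

Lemma mlift_sub_span mu p q : connect (divisor_edge mu) p q ->
  in_span edge_syzygy (fun i => mlift mu p i - mlift mu q i).
Proof.
move=> /connectP [pth edges ->] {q}; elim: pth p edges => [|p1 pth IH] p /=.
  by move=> _; apply: (in_span_eq (in_span0 edge_syzygy)) => i; rewrite subrr.
case/andP => /and3P [Tpp1 le_p le_p1] /IH span_rest.
pose l := mlcm (m p) (m p1).
have le_l : (l <= mu)%MM by rewrite lem_mlcm le_p le_p1.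
have span_pp1 := in_spanMl 'X_[mu - l] (in_span_gen edge_syzygy (p, p1)).
apply: (in_span_eq (in_spanD span_pp1 span_rest)) => i.
rewrite /edge_syzygy /= Tpp1 /pair_syzygy mulrBr.
by rewrite !mulX_mlift ?lem_mlcml ?lem_mlcmr // addrA subrK.
Qed.

Hypothesis divisors_connected : forall mu p q,
  (m p <= mu)%MM -> (m q <= mu)%MM -> connect (divisor_edge mu) p q.

Lemma syzygy_in_span v : syzygy u v -> in_span edge_syzygy v.
Proof.
move=> syz_v.
pose rho mu := [pick p | (m p <= mu)%MM].
pose lead i n := odflt i (rho (n + m i)%MM).
have rho_lead i n : rho (n + m i)%MM = Some (lead i n).
  by rewrite /lead /rho; case: pickP => // none; have := none i; rewrite lem_addl.
have le_lead i n : (m (lead i n) <= n + m i)%MM.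
  by move: (rho_lead i n); rewrite /rho; case: pickP => // p le_p [<-].
pose v' q := \sum_i \sum_(n <- msupp (v i)) ((v i)@_n)%:MP * mlift (n + m i)%MM (lead i n) q.
have span_vv' : in_span edge_syzygy (fun q => v q - v' q).
  have step i n : in_span edge_syzygy
      (fun q => mlift (n + m i)%MM i q - mlift (n + m i)%MM (lead i n) q).
    exact: mlift_sub_span (divisors_connected (lem_addl _ _) (le_lead i n)).
  apply: (in_span_eq (in_span_sum _ (fun i =>
            in_span_sum _ (fun n => in_spanMl ((v i)@_n)%:MP (step i n))))) => q.
  rewrite {1}(mlift_expand v q) -sumrB; apply: eq_bigr => i _.
  by rewrite -sumrB; apply: eq_bigr => n _; rewrite mulrBr.
have syz_v' : syzygy u v'.
  have := in_span_syzygy edge_syzygyP span_vv'; rewrite /syzygy.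
  under eq_bigr do rewrite mulrBl.
  by rewrite sumrB syz_v sub0r => /eqP; rewrite oppr_eq0 => /eqP.
have v'0 : forall q, v' q = 0.
  apply: (syzygy_eq0 (rho := rho) syz_v') => q mu rho_mu.
  rewrite mulr_suml raddf_sum big1 // => i _; rewrite /= mulr_suml raddf_sum big1 // => n _.
  rewrite /= -mulrA mlift_mulX // mul_mpolyC.
  case: eqP => [qlead|_]; last by rewrite scaler0 mcoeff0.
  rewrite mcoeffZ mcoeffX; case: eqP => [e|_]; last by rewrite mulr0.
  by move: rho_mu; rewrite -e rho_lead qlead eqxx.
by apply: (in_span_eq span_vv') => q; rewrite v'0 subr0.
Qed.

Hypothesis edges_linear : forall p q, T p q ->
  mdeg (mlcm (m p) (m q) - m p) = 1%N /\ mdeg (mlcm (m p) (m q) - m q) = 1%N.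

Lemma linear_syzygy_basis :
  exists (k : nat) (w : 'I_k -> 'I_r -> R),
    (forall l, syzygy u (w l)) /\ (forall l i, linear_form (w l i)) /\
    (forall v, syzygy u v -> exists c : 'I_k -> R, forall i, v i = \sum_(l < k) c l * w l i).
Proof.
exists #|{: 'I_r * 'I_r}|, (fun l => edge_syzygy (enum_val l)).
split=> [l|]; last split=> [l i|v /syzygy_in_span].
- exact: edge_syzygyP.
- rewrite /edge_syzygy; case: (enum_val l) => p q /=; case Tpq: (T p q).
    by case: (edges_linear Tpq) => *; exact: pair_syzygy_linear.
  exact: linear_form0.
- exact: in_span_enum.
Qed.

End Connected.
End MonomialSyzygies.

Section CoverIdeal.
Variables (s : nat) (E : rel 'I_s).
Local Notation mvc := (minimal_vertex_cover E).

Definition min_covers : {set {set 'I_s}} := [set C | mvc C].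

Definition cover_of (i : 'I_#|min_covers|) : {set 'I_s} := enum_val i.

Definition cover_mnm i : 'X_{1..s} := mnm_of_set (cover_of i).

Definition cover_of_swap : rel 'I_#|min_covers| :=
  [rel p q | #|cover_of p :\: cover_of q| == 1%N].

Lemma cover_ofP i : mvc (cover_of i).
Proof. by have := enum_valP i; rewrite inE. Qed.

Lemma cover_of_onto C : mvc C -> exists i, cover_of i = C.
Proof.
move=> mvcC; have C_in : C \in min_covers by rewrite inE.
by exists (enum_rank_in C_in C); rewrite /cover_of enum_rankK_in.
Qed.

Lemma cover_ideal_genE (K : fieldType) p :
  cover_ideal K E p <-> ideal_gen (fun q => exists i, q = 'X_[cover_mnm i]) p.
Proof.
split; apply: ideal_gen_sub => q.
  by case=> C [/cover_of_onto [i <-] ->]; exists i; rewrite mpolyX_mnm_of_set.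
by case=> i ->; exists (cover_of i); rewrite mpolyX_mnm_of_set; split=> //; apply: cover_ofP.
Qed.

Lemma cover_mnm_le i j : (cover_mnm j <= cover_mnm i)%MM -> j = i.
Proof.
rewrite /cover_mnm lem_mnm_of_set => sub; apply: enum_val_inj.
apply: (mvc_min (cover_ofP i) (mvc_vc (cover_ofP j))).
by apply: subset_trans sub _; apply/subsetP => a; rewrite inE mnm_of_setE lt0b.
Qed.

Hypothesis E_simple : simple_graph E.
Hypothesis E_unmixed : unmixed E.

Lemma cover_of_swap_linear p q : cover_of_swap p q ->
  mdeg (mlcm (cover_mnm p) (cover_mnm q) - cover_mnm p) = 1%N /\
  mdeg (mlcm (cover_mnm p) (cover_mnm q) - cover_mnm q) = 1%N.
Proof.
move=> /eqP pq1; rewrite {2}mlcmC !mlcm_mnm_of_setB !mdeg_mnm_of_set pq1.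
by rewrite (mvc_cardD E_unmixed (cover_ofP q) (cover_ofP p)) pq1.
Qed.

Hypothesis E_C4_free : ~ has_induced_C4 E.

Lemma cover_mnm_connected mu p q : (cover_mnm p <= mu)%MM -> (cover_mnm q <= mu)%MM ->
  connect (divisor_edge cover_mnm cover_of_swap mu) p q.
Proof.
rewrite !lem_mnm_of_set => sub_p sub_q.
have p_in := enum_valP p.
rewrite -[p](enum_valK_in p_in) -[q](enum_valK_in p_in).
apply: (homo_connect (e := cover_swap E [set i | 0 < mu i]%N)).
  move=> C D /and5P [mvcC mvcD sCU sDU CD1].
  rewrite /divisor_edge /cover_of_swap /cover_mnm /= !lem_mnm_of_set /cover_of.
  by rewrite !enum_rankK_in ?inE // CD1 sCU sDU.
exact: (cover_swap_connect E_simple E_unmixed E_C4_free (cover_ofP p) (cover_ofP q) sub_p sub_q).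
Qed.

End CoverIdeal.

Theorem theorem5p13 (K : fieldType) (s : nat) (E : rel 'I_s) :
  simple_graph E -> unmixed E -> ~ has_induced_C4 E ->
  linearly_presented (cover_ideal K E).
Proof.
move=> E_simple E_unmixed E_C4_free.
exists #|min_covers E|, (@cover_mnm s E); split.
- exact: cover_ideal_genE.
- move=> i; apply: mpolyX_notin_ideal => j ji.
  by apply: contra ji => /cover_mnm_le ->.
- by move=> i j; rewrite /cover_mnm !mdeg_mnm_of_set; apply: E_unmixed; apply: cover_ofP.
- apply: linear_syzygy_basis.
    exact: cover_mnm_connected.
  exact: cover_of_swap_linear.
Qed.
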